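(* Let $(g(x))_{x\ge0}$ be a semigroup acting on a real finite-dimensional vector space $V$, let $V=\bigoplus_{i=1}^nV_i$ be an SRPD, and suppose that for some component $V_i$ and some $x_0>0$ the map $g(x_0)|_{V_i}$ has eigenvalue $0$. Then $g(x)|_{V_i}$ has $0$ as its only eigenvalue for every $x>0$, and $V_i\subseteq\ker g(x)$ for all $x>0$.
   Context: A semigroup is a map $g:[0,\infty)\to L(V)$ with $g(0)=\mathrm{id}$ and $g(x+y)=g(x)g(y)$ for all $x,y\ge0$. A simultaneous real primary decomposition (SRPD) is a decomposition $V=\bigoplus_{i=1}^nV_i$ into nonzero subspaces, each $g(x)$-invariant for all $x\ge0$, such that each $V_i$ is either of first type: for every $x\ge0$, $g(x)|_{V_i}$ has exactly one (complex) eigenvalue $\lambda(x)$, which is real and $\ge0$; or of second type: for every $x\ge 0$ the eigenvalues of $g(x)|_{V_i}$ lie in $\{\lambda(x),\overline{\lambda(x)}\}$ for some $\lambda(x)\in\mathbb C$, with $\lambda(x)\notin\mathbb R$ for some $x$. *)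

From HB Require Import structures.
From mathcomp Require Import all_boot all_order all_algebra.
From mathcomp Require Import complex.
From mathcomp Require Import reals.
Set Implicit Arguments. Unset Strict Implicit. Unset Printing Implicit Defensive.
Import Order.TTheory GRing.Theory Num.Theory.
Local Open Scope ring_scope.
Local Open Scope complex_scope.

(* Conventions: V = 'rV[R]_d (row vectors), a linear map is a matrix A acting
   on the right, v |-> v *m A.  Subspaces are row spaces of matrices (mxalgebra).
   Composition "f o h" corresponds to H *m F. *)

(* Matrix of the restriction of A to the (A-invariant) row space of W,
   in the basis row_base W. *)
Definition restr_mx (R : fieldType) (d : nat) (W A : 'M[R]_d) : 'M[R]_(\rank W) :=
  row_base W *m A *m pinvmx (row_base W).

Definition restr_eig (R : rcfType) (d : nat) (W A : 'M[R]_d) (mu : R[i]) : bool :=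
  eigenvalue (map_mx (real_complex R) (restr_mx W A)) mu.

(* g : [0,oo) -> L(V) is a semigroup (values at x < 0 are irrelevant). *)
Definition semigroup (R : realType) (d : nat) (g : R -> 'M[R]_d) : Prop :=
  g 0 = 1%:M /\
  forall x y : R, 0 <= x -> 0 <= y -> g (x + y) = g y *m g x.
  (* g(x+y) = g(x) o g(y) in the row-vector convention *)

Definition first_type (R : realType) (d : nat) (g : R -> 'M[R]_d) (W : 'M[R]_d) : Prop :=
  forall x : R, 0 <= x ->
    exists2 l : R, 0 <= l & forall mu : R[i], restr_eig W (g x) mu <-> mu = l%:C.

Definition second_type (R : realType) (d : nat) (g : R -> 'M[R]_d) (W : 'M[R]_d) : Prop :=
  exists lam : R -> R[i],
    (forall x : R, 0 <= x -> forall mu : R[i],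
        restr_eig W (g x) mu -> mu = lam x \/ mu = conjc (lam x)) /\
    (exists2 x : R, 0 <= x & 'Im (lam x) != 0).

Definition SRPD (R : realType) (d n : nat) (g : R -> 'M[R]_d) (V_ : 'I_n -> 'M[R]_d) : Prop :=
  (\sum_(i < n) V_ i :=: 1%:M)%MS /\
  mxdirect (\sum_(i < n) V_ i) /\
  (forall i, V_ i != 0) /\
  (forall i x, 0 <= x -> stablemx (V_ i) (g x)) /\
  (forall i, first_type g (V_ i) \/ second_type g (V_ i)).

From HB Require Import structures.
From mathcomp Require Import all_boot all_order all_algebra.
From mathcomp Require Import complex.
From mathcomp Require Import reals.
Import Order.TTheory GRing.Theory Num.Theory.
Local Open Scope ring_scope.
Local Open Scope complex_scope.

(* Write W = V_i and A|_W for the matrix of the restriction of a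
   W-stable map A to W.
   1. Restriction to a stable subspace is multiplicative, so by the semigroup
      law g(k y)|_W = (g(y)|_W)^k and g(y')|_W = g(y' - x0)|_W * g(x0)|_W.
      Given y > 0 pick k with x0 < k y (Archimedes); then
      det(g(y)|_W)^k = det(g(k y - x0)|_W) * det(g(x0)|_W) = 0, i.e. 0 is an
      eigenvalue of g(y)|_W for every y > 0.
   2. A primary component has at most the eigenvalues {l, conj l}; if 0 is one
      of them then l = 0, so 0 is the only eigenvalue of g(y)|_W.
   3. A real matrix whose complexification has 0 as its only eigenvalue is
      nilpotent (Cayley-Hamilton), so (g(x/r)|_W)^r = g(x)|_W = 0 where
      r = dim W, and a stable map with zero restriction kills W. *)

Section Restriction.
Variables (F : fieldType) (d : nat) (W : 'M[F]_d).

Lemma restr_coordK (A : 'M[F]_d) : stablemx W A ->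
  row_base W *m A *m pinvmx (row_base W) *m row_base W = row_base W *m A.
Proof.
move=> sWA; apply: mulmxKpV.
by rewrite (eqmxMr _ (eq_row_base W)) eq_row_base.
Qed.

Lemma restr_mxM (A B : 'M[F]_d) : stablemx W A ->
  restr_mx W (A *m B) = restr_mx W A *m restr_mx W B.
Proof.
move=> sWA; rewrite /restr_mx (mulmxA (_ *m _ *m pinvmx _)) (mulmxA _ (row_base W)).
by rewrite restr_coordK // !(mulmxA (row_base W)).
Qed.

Lemma restr_mxX (A : 'M[F]_d) (k : nat) : stablemx W A ->
  restr_mx W (A ^+ k.+1) = restr_mx W A ^+ k.+1.
Proof.
move=> sWA; elim: k => [|k IHk]; first by rewrite !expr1.
by rewrite exprS -mulmxE restr_mxM // IHk mulmxE -exprS.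
Qed.

Lemma restr_mx_eq0 (A : 'M[F]_d) : stablemx W A -> restr_mx W A = 0 ->
  W *m A = 0.
Proof.
move=> sWA rA0.
have baseA0 : row_base W *m A = 0.
  by rewrite -restr_coordK // -/(restr_mx W A) rA0 mul0mx.
have WK : W *m pinvmx (row_base W) *m row_base W = W.
  by apply: mulmxKpV; rewrite eq_row_base.
by rewrite -WK -mulmxA baseA0 mulmx0.
Qed.

End Restriction.

Lemma det_mxX (R : comUnitRingType) (m : nat) (M : 'M[R]_m) (k : nat) :
  \det (M ^+ k) = \det M ^+ k.
Proof.
elim: k => [|k IHk]; first by rewrite !expr0 det1.
by rewrite !exprS -mulmxE det_mulmx IHk.
Qed.

Lemma restr_eig0 (R : rcfType) (d : nat) (W A : 'M[R]_d) :
  restr_eig W A 0 = (\det (restr_mx W A) == 0).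
Proof.
rewrite /restr_eig eigenvalue_root_char /root horner_coef0 char_poly_det.
by rewrite det_map_mx mulf_eq0 signr_eq0 /= fmorph_eq0.
Qed.

(* If all complex eigenvalues of a real square matrix vanish, its
   characteristic polynomial is 'X^n, so by Cayley-Hamilton M^n = 0. *)
Lemma eigen0_nilpotent (R : rcfType) (m : nat) (M : 'M[R]_m) :
  (forall mu, eigenvalue (map_mx (real_complex R) M) mu -> mu = 0) ->
  M ^+ m = 0.
Proof.
case: m M => [|m] M eig0; first by rewrite flatmx0.
set N := map_mx (real_complex R) M.
have [r charN] := closed_field_poly_normal (char_poly N).
rewrite (monicP (char_poly_monic N)) scale1r in charN.
have r0 z : z \in r -> z = 0.
  by move=> zr; apply: eig0; rewrite eigenvalue_root_char charN root_prod_XsubC.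
have size_r : size r = m.+1.
  by have := size_char_poly N; rewrite charN size_prod_XsubC; case.
have charX : char_poly N = 'X ^+ m.+1.
  rewrite charN big_seq (eq_bigr (fun=> 'X)) => [|z /r0 ->]; last by rewrite subr0.
  by rewrite -big_seq (big_nth 0) big_mkord prodr_const card_ord size_r.
have NX0 : N ^+ m.+1 = 0.
  by have := Cayley_Hamilton N; rewrite charX rmorphXn /= horner_mx_X.
by apply: (@map_mx_inj _ _ (real_complex R)); rewrite rmorphXn map_mx0.
Qed.

Section Semigroup.
Variables (R : realType) (d : nat) (g : R -> 'M[R]_d).
Hypothesis g_semigroup : semigroup g.

Lemma semigroup_natmul (y : R) (k : nat) : 0 <= y -> g (k%:R * y) = g y ^+ k.
Proof.
case: g_semigroup => g0 gD y_ge0; elim: k => [|k IHk].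
  by rewrite mul0r g0 expr0.
have ky_ge0 : 0 <= k%:R * y by rewrite mulr_ge0.
by rewrite -addn1 natrD mulrDl mul1r gD // IHk addn1 exprS mulmxE.
Qed.

Variable W : 'M[R]_d.
Hypothesis W_stable : forall y, 0 <= y -> stablemx W (g y).

(* The eigenvalue 0 of g(x0)|_W at one time x0 > 0 spreads to every time
   y > 0: g(k y)|_W = (g(y)|_W)^k factors through g(x0)|_W once k y > x0. *)
Lemma restr_eig0_spreads (x0 y : R) : 0 < x0 -> 0 < y ->
  restr_eig W (g x0) 0 -> restr_eig W (g y) 0.
Proof.
rewrite !restr_eig0 => x0_gt0 y_gt0 /eqP det_x0; apply/eqP.
have [k x0_lt] : exists k : nat, x0 < k.+1%:R * y.
  exists (Num.Def.archi_bound (x0 / y)).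
  have := archi_boundP (divr_ge0 (ltW x0_gt0) (ltW y_gt0)).
  rewrite ltr_pdivrMr // => /lt_le_trans; apply.
  by apply: ler_wpM2r; [exact: ltW | rewrite ler_nat].
have rest_ge0 : 0 <= k.+1%:R * y - x0 by rewrite subr_ge0 ltW.
have factor : g (k.+1%:R * y) = g (k.+1%:R * y - x0) *m g x0.
  by rewrite -g_semigroup.2 ?(ltW x0_gt0) // (addrC x0) subrK.
have := congr1 (fun M => \det (restr_mx W M)) factor.
rewrite /= restr_mxM ?W_stable // det_mulmx det_x0 mulr0.
rewrite semigroup_natmul ?ltW // restr_mxX ?W_stable ?ltW // det_mxX.
by move/eqP; rewrite expf_eq0 => /andP[_ /eqP].
Qed.

(* If g(x)|_W has no eigenvalue but 0, then W lies in the kernel of g(x):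
   g(x)|_W = (g(x/r)|_W)^r with r = dim W, and g(x/r)|_W is nilpotent. *)
Lemma restr_nilpotent_kernel (x : R) : 0 < x ->
  (forall y, 0 < y -> forall mu, restr_eig W (g y) mu -> mu = 0) ->
  W *m g x = 0.
Proof.
move=> x_gt0 eig0.
case: (posnP (\rank W)) => [rank0|rank_gt0].
  have /eqP -> : W == 0 by rewrite -mxrank_eq0 rank0.
  by rewrite mul0mx.
set y := x / (\rank W)%:R.
have y_gt0 : 0 < y by rewrite divr_gt0 // ltr0n.
have x_eq : x = (\rank W)%:R * y by rewrite /y mulrC divfK // pnatr_eq0 -lt0n.
apply: restr_mx_eq0; first by rewrite W_stable ?ltW.
have [r rW] : exists r, \rank W = r.+1 by case: (\rank W) rank_gt0 => // r; exists r.
have -> : g x = g y ^+ r.+1 by rewrite {1}x_eq semigroup_natmul ?ltW // rW.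
rewrite restr_mxX ?W_stable ?ltW // -[r.+1]rW.
by apply: eigen0_nilpotent => mu; apply: eig0.
Qed.

End Semigroup.

Arguments restr_eig0_spreads {R d g} g_semigroup {W} W_stable {x0 y}.
Arguments restr_nilpotent_kernel {R d g} g_semigroup {W} W_stable {x}.

(* A primary component (first or second type) whose restriction of g(y) has
   eigenvalue 0 has no other eigenvalue: its spectrum is {l} or {l, conj l},
   and 0 belongs to it only if l = 0. *)
Lemma primary_eig0_only (R : realType) (d : nat) (g : R -> 'M[R]_d)
    (W : 'M[R]_d) (y : R) :
  first_type g W \/ second_type g W -> 0 <= y -> restr_eig W (g y) 0 ->
  forall mu, restr_eig W (g y) mu -> mu = 0.
Proof.
move=> [first|[lam [spec _]]] y_ge0 eig0 mu eig_mu.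
  have [l _ specl] := first y y_ge0.
  by rewrite (specl mu).1 // -((specl 0).1 eig0).
have lam0 : lam y = 0.
  case: (spec y y_ge0 0 eig0) => [|/(congr1 conjc)]; first by move<-.
  by rewrite conjcK rmorph0 => <-.
by case: (spec y y_ge0 mu eig_mu) => ->; rewrite lam0 ?rmorph0.
Qed.

Theorem mainTheorem4 (R : realType) (d n : nat) (g : R -> 'M[R]_d)
    (V_ : 'I_n -> 'M[R]_d) (i : 'I_n) (x0 : R) :
  semigroup g -> SRPD g V_ -> 0 < x0 -> restr_eig (V_ i) (g x0) 0 ->
  forall x : R, 0 < x ->
    (forall mu : R[i], restr_eig (V_ i) (g x) mu <-> mu = 0) /\
    V_ i *m g x = 0.
Proof.
move=> g_sg [_ [_ [_ [stable primary]]]] x0_gt0 eig0_x0 x x_gt0.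
have W_stable := stable i.
have eig0_all y : 0 < y -> restr_eig (V_ i) (g y) 0.
  by move=> y_gt0; exact: (restr_eig0_spreads g_sg W_stable x0_gt0 y_gt0 eig0_x0).
have only0 y : 0 < y -> forall mu, restr_eig (V_ i) (g y) mu -> mu = 0.
  by move=> y_gt0; apply: primary_eig0_only (primary i) (ltW y_gt0) (eig0_all y y_gt0).
split; last exact: (restr_nilpotent_kernel g_sg W_stable x_gt0 only0).
by move=> mu; split=> [|->]; [apply: only0 | apply: eig0_all].
Qed.
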